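(* Let $\mathfrak{sl}_2[x,y] := \mathfrak{sl}_2 \otimes_{\mathbb{C}} \mathbb{C}[x,y]$ be the complex Lie algebra of $\mathfrak{sl}_2$-valued polynomials in two commuting variables $x,y$, with bracket $[\xi,\eta](x,y)=[\xi(x,y),\eta(x,y)]$. Consider the Lie algebra $2$-cochain $$c(\xi,\eta) := \operatorname{Tr}\big(\partial_x\xi\,\partial_y\eta - \partial_y\xi\,\partial_x\eta\big)\big|_{x=y=0}, \qquad \xi,\eta\in\mathfrak{sl}_2[x,y].$$ Then $c$ is a $2$-cocycle, and the cup-square of its class in $H^2(\mathfrak{sl}_2[x,y];\mathbb{C})$ is zero in $H^4(\mathfrak{sl}_2[x,y];\mathbb{C})$.
   Context: Lie algebra cohomology is taken with trivial coefficients $\mathbb{C}$ (Chevalley–Eilenberg cohomology), with its cup product. $\partial_x,\partial_y$ denote partial derivatives applied entrywise, $\operatorname{Tr}$ is the trace of $2\times 2$ matrices. *)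

From HB Require Import structures.
From mathcomp Require Import all_boot all_order all_algebra.
From mathcomp Require Import complex.
From mathcomp Require Import reals.
Set Implicit Arguments. Unset Strict Implicit. Unset Printing Implicit Defensive.
Import Order.TTheory GRing.Theory Num.Theory.
Local Open Scope ring_scope.

Section SL2XY.
Variable R : realType.

Definition CC : Type := R[i].
HB.instance Definition _ := GRing.Field.on CC.

(* C[x,y] as {poly {poly C}}: the inner variable is x, the outer variable is y *)
Definition Pxy : Type := {poly {poly CC}}.

(* gl2[x,y] = 2x2 matrices over C[x,y]; sl2[x,y] = the traceless ones *)
Definition Mxy : Type := 'M[{poly {poly CC}}]_2.

Definition in_sl2 (X : 'M[{poly {poly CC}}]_2) : Prop := \tr X = 0.

Definition cscale (a : CC) (X : 'M[{poly {poly CC}}]_2) : 'M[{poly {poly CC}}]_2 :=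
  (a%:P)%:P *: X.

Definition lbr (X Y : 'M[{poly {poly CC}}]_2) : 'M[{poly {poly CC}}]_2 :=
  X *m Y - Y *m X.

Definition dx (X : 'M[{poly {poly CC}}]_2) : 'M[{poly {poly CC}}]_2 :=
  map_mx (map_poly (@deriv CC)) X.
Definition dy (X : 'M[{poly {poly CC}}]_2) : 'M[{poly {poly CC}}]_2 :=
  map_mx (@deriv {poly CC}) X.

Definition ev0 (p : {poly {poly CC}}) : CC := (p.[0]).[0].

(* n-cochains are represented by functions on lists of elements of gl2[x,y];
   only their values on lists of length n of traceless matrices matter. *)
Definition all_sl2 (s : seq 'M[{poly {poly CC}}]_2) : Prop :=
  forall k, (k < size s)%N -> in_sl2 (nth 0 s k).

Definition is_cochain (n : nat) (f : seq 'M[{poly {poly CC}}]_2 -> CC) : Prop :=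
  (forall (s : seq 'M[{poly {poly CC}}]_2) (k : nat) (a : CC) (v w : 'M[{poly {poly CC}}]_2),
      size s = n -> all_sl2 s -> (k < n)%N -> in_sl2 v -> in_sl2 w ->
      f (set_nth 0 s k (cscale a v + w)) =
        a * f (set_nth 0 s k v) + f (set_nth 0 s k w)) /\
  (forall (s : seq 'M[{poly {poly CC}}]_2) (i j : nat),
      size s = n -> all_sl2 s -> (i < j)%N -> (j < n)%N ->
      nth 0 s i = nth 0 s j -> f s = 0).

Definition drop2 (s : seq 'M[{poly {poly CC}}]_2) (i j : nat) : seq 'M[{poly {poly CC}}]_2 :=
  [seq nth 0 s k | k <- iota 0 (size s) & (k != i) && (k != j)].

Definition CEd (f : seq 'M[{poly {poly CC}}]_2 -> CC) (s : seq 'M[{poly {poly CC}}]_2) : CC :=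
  \sum_(i < size s) \sum_(j < size s | (i < j)%N)
     (-1) ^+ (i + j) * f (lbr (nth 0 s i) (nth 0 s j) :: drop2 s i j).

(* cup product of a p-cochain a and a q-cochain b (sum over (p,q)-shuffles):
   (a \cup b)(v_0..v_{p+q-1}) = sum_{I, #I = p} sgn(I) a(v_I) b(v_{complement I}) *)
Definition cup (p q : nat) (a b : seq 'M[{poly {poly CC}}]_2 -> CC)
    (s : seq 'M[{poly {poly CC}}]_2) : CC :=
  \sum_(I : {set 'I_(p + q)} | #|I| == p)
     (-1) ^+ ((\sum_(i in I) (i : nat)) - 'C(p, 2))%N *
     a (map (fun i : 'I_(p + q) => nth 0 s i) (enum I)) *
     b (map (fun i : 'I_(p + q) => nth 0 s i) (enum (~: I))).

Definition c2 (X Y : 'M[{poly {poly CC}}]_2) : CC :=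
  ev0 (\tr (dx X *m dy Y - dy X *m dx Y)).

Definition c_cochain (s : seq 'M[{poly {poly CC}}]_2) : CC :=
  c2 (nth 0 s 0) (nth 0 s 1).

End SL2XY.

(* Write X_pq for the coefficient of x^p y^q in X, so that
   c(X, Y) = tr(X_10 Y_01 - X_01 Y_10).  The cocycle identity for c, and the
   identity d b = c \cup c for
     b(X, Y, Z) = - (tr(X_20 [Y_01, Z_01]) + tr(Y_20 [Z_01, X_01]) + tr(Z_20 [X_01, Y_01])),
   rest on the ad-invariance of the forms tr(A B) and tr(A [B, C]): in d b the
   constant terms X_00 enter only through the adjoint action and cancel, and what
   survives is the x^2-coefficient [X_10, Y_10] of [X, Y], so that d b is the
   alternating sum of the tr([X_10, Y_10] [Z_01, W_01]).  On sl2,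
   tr([A, B] [C, D]) = 2 (tr(A D) tr(B C) - tr(A C) tr(B D)), which turns this sum
   into the shuffle sum defining c \cup c. *)

From HB Require Import structures.
From mathcomp Require Import all_boot all_order all_algebra.
From mathcomp Require Import complex reals.
From mathcomp Require Import ring.
Set Implicit Arguments. Unset Strict Implicit. Unset Printing Implicit Defensive.
Import Order.TTheory GRing.Theory Num.Theory.
Local Open Scope ring_scope.

Definition mxbr (T : pzRingType) (n : nat) (A B : 'M[T]_n) : 'M[T]_n :=
  A *m B - B *m A.

Section PolyMatrixCoefficients.
Variables (K : nzRingType) (n : nat).
Implicit Types X Y : 'M[{poly {poly K}}]_n.

(* [mxcoef p q X] is the coefficient of x^p y^q, y being the outer variable. *)
Definition mxcoef (p q : nat) X : 'M[K]_n := \matrix_(i, j) ((X i j)`_q)`_p.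

Lemma mxcoefD p q X Y : mxcoef p q (X + Y) = mxcoef p q X + mxcoef p q Y.
Proof. by apply/matrixP => i j; rewrite !mxE !coefD. Qed.

Lemma mxcoefN p q X : mxcoef p q (- X) = - mxcoef p q X.
Proof. by apply/matrixP => i j; rewrite !mxE !coefN. Qed.

Lemma mxcoefZ p q a X : mxcoef p q ((a%:P)%:P *: X) = a *: mxcoef p q X.
Proof. by apply/matrixP => i j; rewrite !mxE !coefCM. Qed.

Lemma mxtrace_mxcoef p q X : \tr (mxcoef p q X) = ((\tr X)`_q)`_p.
Proof. by rewrite /mxtrace !coef_sum; apply: eq_bigr => i _; rewrite mxE. Qed.

Lemma mxcoef_mul p q X Y : mxcoef p q (X *m Y) =
  \sum_(i < q.+1) \sum_(j < p.+1) mxcoef j i X *m mxcoef (p - j) (q - i) Y.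
Proof.
have coefM2 (P Q : {poly {poly K}}) : ((P * Q)`_q)`_p =
    \sum_(i < q.+1) \sum_(j < p.+1) (P`_i)`_j * (Q`_(q - i))`_(p - j).
  by rewrite coefM coef_sum; apply: eq_bigr => i _; rewrite coefM.
apply/matrixP => r t; rewrite !mxE coef_sum coef_sum summxE.
under eq_bigr do rewrite coefM2.
under [RHS]eq_bigr do rewrite summxE.
under [RHS]eq_bigr do under eq_bigr do rewrite mxE.
rewrite exchange_big; apply: eq_bigr => i _.
rewrite exchange_big; apply: eq_bigr => j _.
by apply: eq_bigr => k _; rewrite !mxE.
Qed.

Lemma mxcoef_mul_rev p q X Y : mxcoef p q (X *m Y) =
  \sum_(i < q.+1) \sum_(j < p.+1) mxcoef (p - j) (q - i) X *m mxcoef j i Y.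
Proof.
rewrite mxcoef_mul (reindex_inj rev_ord_inj); apply: eq_bigr => i _.
rewrite (reindex_inj rev_ord_inj); apply: eq_bigr => j _ /=.
by rewrite !subSS !subKn // -ltnS.
Qed.

Lemma mxcoef_br p q X Y : mxcoef p q (mxbr X Y) =
  \sum_(i < q.+1) \sum_(j < p.+1) mxbr (mxcoef j i X) (mxcoef (p - j) (q - i) Y).
Proof.
rewrite mxcoefD mxcoefN mxcoef_mul mxcoef_mul_rev -sumrB.
by apply: eq_bigr => i _; rewrite -sumrB.
Qed.

Lemma mxcoef_br10 X Y : mxcoef 1 0 (mxbr X Y) =
  mxbr (mxcoef 0 0 X) (mxcoef 1 0 Y) + mxbr (mxcoef 1 0 X) (mxcoef 0 0 Y).
Proof. by rewrite mxcoef_br !big_ord_recl !big_ord0 /= /bump /= !addr0. Qed.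

Lemma mxcoef_br01 X Y : mxcoef 0 1 (mxbr X Y) =
  mxbr (mxcoef 0 0 X) (mxcoef 0 1 Y) + mxbr (mxcoef 0 1 X) (mxcoef 0 0 Y).
Proof. by rewrite mxcoef_br !big_ord_recl !big_ord0 /= /bump /= !addr0. Qed.

Lemma mxcoef_br20 X Y : mxcoef 2 0 (mxbr X Y) =
  mxbr (mxcoef 0 0 X) (mxcoef 2 0 Y) + mxbr (mxcoef 1 0 X) (mxcoef 1 0 Y)
  + mxbr (mxcoef 2 0 X) (mxcoef 0 0 Y).
Proof. by rewrite mxcoef_br !big_ord_recl !big_ord0 /= /bump /= !addr0 addrA. Qed.

End PolyMatrixCoefficients.

Section TwoByTwo.
Variable K : comNzRingType.

Definition mx2 (a b c d : K) : 'M[K]_2 :=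
  \matrix_(i, j) if i == 0 then if j == 0 then a else b else if j == 0 then c else d.

Lemma mx2P (A : 'M[K]_2) : exists a b c d, A = mx2 a b c d.
Proof.
exists (A 0 0), (A 0 1), (A 1 0), (A 1 1); apply/matrixP => i j; rewrite !mxE.
by case: i => [[|[|]]] //= ?; case: j => [[|[|]]] //= ?; congr (A _ _); apply/val_inj.
Qed.

Lemma mxtrace_mx2 a b c d : \tr (mx2 a b c d) = a + d.
Proof. by rewrite /mxtrace big_ord_recr big_ord1 /= !mxE. Qed.

Lemma mx2_traceless (A : 'M[K]_2) : \tr A = 0 -> exists a b c, A = mx2 a b c (- a).
Proof.
have [a [b [c [d ->]]]] := mx2P A; rewrite mxtrace_mx2 => /eqP.
by rewrite addrC addr_eq0 => /eqP ->; exists a, b, c.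
Qed.

Lemma mx2D a b c d a' b' c' d' :
  mx2 a b c d + mx2 a' b' c' d' = mx2 (a + a') (b + b') (c + c') (d + d').
Proof. by apply/matrixP => i j; rewrite !mxE; case: (i == 0); case: (j == 0). Qed.

Lemma mx2N a b c d : - mx2 a b c d = mx2 (- a) (- b) (- c) (- d).
Proof. by apply/matrixP => i j; rewrite !mxE; case: (i == 0); case: (j == 0). Qed.

Lemma mx2Z k a b c d : k *: mx2 a b c d = mx2 (k * a) (k * b) (k * c) (k * d).
Proof. by apply/matrixP => i j; rewrite !mxE; case: (i == 0); case: (j == 0). Qed.

Lemma mx2M a b c d a' b' c' d' : mx2 a b c d *m mx2 a' b' c' d' =
  mx2 (a * a' + b * c') (a * b' + b * d') (c * a' + d * c') (c * b' + d * d').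
Proof.
apply/matrixP => i j; rewrite !mxE big_ord_recr big_ord1 /= !mxE /=.
by case: (i == 0); case: (j == 0).
Qed.

Lemma mxtrace_br_mul_br (A B C D : 'M[K]_2) : \tr C = 0 -> \tr D = 0 ->
  \tr (mxbr A B *m mxbr C D) =
  2%:R * (\tr (A *m D) * \tr (B *m C) - \tr (A *m C) * \tr (B *m D)).
Proof.
move=> /mx2_traceless[c1 [c2 [c3 ->]]] /mx2_traceless[d1 [d2 [d3 ->]]].
have [a1 [a2 [a3 [a4 ->]]]] := mx2P A; have [b1 [b2 [b3 [b4 ->]]]] := mx2P B.
rewrite /mxbr !(mx2D, mx2N, mx2M) !mxtrace_mx2; ring.
Qed.

End TwoByTwo.

Lemma sum_card2 (V : nmodType) (n : nat) (F : {set 'I_n} -> V) :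
  \sum_(I : {set 'I_n} | #|I| == 2%N) F I =
  \sum_(i < n) \sum_(j < n | (i < j)%N) F [set i; j].
Proof.
pose pairs := [set p : 'I_n * 'I_n | (p.1 < p.2)%N].
pose pairset (p : 'I_n * 'I_n) := [set p.1; p.2].
have pairsetE : [set I : {set 'I_n} | #|I| == 2%N] = pairset @: pairs.
  apply/setP => I; rewrite inE; apply/cards2P/imsetP => [[i [j [ij ->]]]|].
    case: (ltngtP i j) => [lt|gt|eq]; last by rewrite (val_inj eq) eqxx in ij.
      by exists (i, j); rewrite ?inE.
    by exists (j, i); rewrite ?inE // /pairset /= setUC.
  case=> [[i j]]; rewrite inE /= => ij ->; exists i, j; split => //.
  by apply: contraTneq ij => ->; rewrite ltnn.
have pairset_inj : {in pairs &, injective pairset}.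
  move=> [a b] [c d]; rewrite !inE /= => ab cd /setP E.
  have : a \in [set c; d] by rewrite -E set21.
  have : b \in [set c; d] by rewrite -E set22.
  rewrite !in_set2 => /orP[]/eqP Eb /orP[]/eqP Ea; subst a b;
    first [done | by rewrite ltnn in ab | by rewrite ltnNge (ltnW cd) in ab].
have -> : \sum_(I : {set 'I_n} | #|I| == 2%N) F I =
          \sum_(I in [set I : {set 'I_n} | #|I| == 2%N]) F I.
  by apply: eq_bigl => I; rewrite inE.
rewrite pairsetE big_imset //.
have -> : \sum_(p in pairs) F (pairset p) =
          \sum_(p : 'I_n * 'I_n | (p.1 < p.2)%N) F (pairset p).
  by apply: eq_bigl => p; rewrite inE.
by rewrite -(pair_big_dep xpredT (fun i j : 'I_n => (i < j)%N) (fun i j => F [set i; j])).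
Qed.

Local Notation ord4 k := (@Ordinal 4 k isT).

Lemma enum_ord4 : enum 'I_4 = [:: ord4 0; ord4 1; ord4 2; ord4 3].
Proof. by apply: (inj_map val_inj); rewrite val_enum_ord. Qed.

Section Sl2Polynomials.
Variable R : realType.
Local Notation C := (CC R).
Local Notation M := 'M[{poly {poly C}}]_2.
Implicit Types X Y Z W : M.

Lemma CEd3 (f : seq M -> C) u v w :
  CEd f [:: u; v; w] = - f [:: lbr u v; w] + f [:: lbr u w; v] - f [:: lbr v w; u].
Proof.
rewrite /CEd /=; under eq_bigr do rewrite big_mkcond.
by rewrite !big_ord_recl !big_ord0 /= /bump /= ?add0n ?add1n /drop2 /=; ring.
Qed.

Lemma CEd4 (f : seq M -> C) v0 v1 v2 v3 : CEd f [:: v0; v1; v2; v3] =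
  - f [:: lbr v0 v1; v2; v3] + f [:: lbr v0 v2; v1; v3] - f [:: lbr v0 v3; v1; v2]
  - f [:: lbr v1 v2; v0; v3] + f [:: lbr v1 v3; v0; v2] - f [:: lbr v2 v3; v0; v1].
Proof.
rewrite /CEd /=; under eq_bigr do rewrite big_mkcond.
by rewrite !big_ord_recl !big_ord0 /= /bump /= ?add0n ?add1n /drop2 /=; ring.
Qed.

Lemma cup22 (f g : seq M -> C) v0 v1 v2 v3 : cup 2 2 f g [:: v0; v1; v2; v3] =
  f [:: v0; v1] * g [:: v2; v3] - f [:: v0; v2] * g [:: v1; v3]
  + f [:: v0; v3] * g [:: v1; v2] + f [:: v1; v2] * g [:: v0; v3]
  - f [:: v1; v3] * g [:: v0; v2] + f [:: v2; v3] * g [:: v0; v1].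
Proof.
have enum4 (A : {set 'I_4}) : enum A = filter (mem A) [:: ord4 0; ord4 1; ord4 2; ord4 3].
  by rewrite -enum_ord4 enumT.
rewrite /cup sum_card2; under eq_bigr do rewrite big_mkcond.
rewrite !big_ord_recl !big_ord0 /= -!big_enum !enum4 /= !inE /= !big_cons !big_nil /=.
ring.
Qed.

Lemma mxtrace_mxcoef_sl2 p q X : in_sl2 X -> \tr (mxcoef p q X) = 0.
Proof. by rewrite mxtrace_mxcoef => ->; rewrite !coef0. Qed.

Lemma c2E X Y :
  c2 X Y = \tr (mxcoef 1 0 X *m mxcoef 0 1 Y - mxcoef 0 1 X *m mxcoef 1 0 Y).
Proof.
have ev0_tr N : ev0 (\tr N) = \tr (mxcoef 0 0 N).
  by rewrite mxtrace_mxcoef /ev0 !horner_coef0.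
have mxcoef00_mul A B : mxcoef 0 0 (A *m B) = mxcoef 0 0 A *m mxcoef 0 0 B.
  by rewrite mxcoef_mul !big_ord_recl !big_ord0 !addr0.
have dx00 A : mxcoef 0 0 (dx A) = mxcoef 1 0 A.
  by apply/matrixP => i j; rewrite !mxE coef_map_id0 ?deriv0 // coef_deriv mulr1n.
have dy00 A : mxcoef 0 0 (dy A) = mxcoef 0 1 A.
  by apply/matrixP => i j; rewrite !mxE coef_deriv mulr1n.
by rewrite /c2 ev0_tr mxcoefD mxcoefN !mxcoef00_mul !dx00 !dy00.
Qed.

Definition trxy X Y : C := \tr (mxcoef 1 0 X *m mxcoef 0 1 Y).

Lemma c2_trxy X Y : c2 X Y = trxy X Y - trxy Y X.
Proof. by rewrite c2E linearB /= [in X in _ - X]mxtrace_mulC. Qed.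

Ltac mx2_generalize := repeat match goal with |- context [mxcoef ?p ?q ?X] =>
  have [? [? [? [? ->]]]] := mx2P (mxcoef p q X) end.
Ltac mx2_expand := rewrite /mxbr ?(mx2D, mx2N, mx2Z, mx2M) ?mxtrace_mx2.

Lemma c2DZl a X Y Z : c2 (cscale a X + Y) Z = a * c2 X Z + c2 Y Z.
Proof. by rewrite !c2E !mxcoefD !mxcoefZ; mx2_generalize; mx2_expand; ring. Qed.

Lemma c2DZr a X Y Z : c2 Z (cscale a X + Y) = a * c2 Z X + c2 Z Y.
Proof. by rewrite !c2E !mxcoefD !mxcoefZ; mx2_generalize; mx2_expand; ring. Qed.

Lemma c2xx X : c2 X X = 0.
Proof. by rewrite c2_trxy subrr. Qed.

Lemma c_is_cochain : is_cochain 2 (@c_cochain R).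
Proof.
split=> [s k a v w + _ + _ _ | s i j + _].
  case: s => [|X [|Y []]] // _; case: k => [|[|]] // _.
  - exact: c2DZl.
  - exact: c2DZr.
case: s => [|X [|Y []]] // _; case: j => [|[|]] //; case: i => // _ _ /= ->.
exact: c2xx.
Qed.

Lemma c_cocycle u v w : CEd (@c_cochain R) [:: u; v; w] = 0.
Proof.
rewrite CEd3 /c_cochain /= !c2E !mxcoef_br10 !mxcoef_br01.
by mx2_generalize; mx2_expand; ring.
Qed.

Definition tr_brx_bry X Y Z W : C :=
  \tr (mxbr (mxcoef 1 0 X) (mxcoef 1 0 Y) *m mxbr (mxcoef 0 1 Z) (mxcoef 0 1 W)).

Lemma tr_brx_bry_sl2 X Y Z W : in_sl2 Z -> in_sl2 W ->
  tr_brx_bry X Y Z W = 2%:R * (trxy X W * trxy Y Z - trxy X Z * trxy Y W).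
Proof. by move=> slZ slW; rewrite /tr_brx_bry mxtrace_br_mul_br ?mxtrace_mxcoef_sl2. Qed.

Definition cup_c_c_primitive (s : seq M) : C :=
  let z k := mxcoef 2 0 (nth 0 s k) in let y k := mxcoef 0 1 (nth 0 s k) in
  - (\tr (z 0%N *m mxbr (y 1%N) (y 2%N)) + \tr (z 1%N *m mxbr (y 2%N) (y 0%N))
     + \tr (z 2%N *m mxbr (y 0%N) (y 1%N))).

Lemma cup_c_c_primitive_is_cochain : is_cochain 3 cup_c_c_primitive.
Proof.
split=> [s k a v w + _ + _ _ | s i j + _].
  case: s => [|X [|Y [|Z []]]] // _; case: k => [|[|[|]]] // _;
  by rewrite /cup_c_c_primitive /= !mxcoefD !mxcoefZ; mx2_generalize; mx2_expand; ring.
case: s => [|X [|Y [|Z []]]] // _; case: j => [|[|[|]]] //; case: i => [|[|]] // _ _ /= ->;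
by rewrite /cup_c_c_primitive /=; mx2_generalize; mx2_expand; ring.
Qed.

Lemma CEd_cup_c_c_primitive v0 v1 v2 v3 :
  CEd cup_c_c_primitive [:: v0; v1; v2; v3] =
  tr_brx_bry v0 v1 v2 v3 - tr_brx_bry v0 v2 v1 v3 + tr_brx_bry v0 v3 v1 v2
  + tr_brx_bry v1 v2 v0 v3 - tr_brx_bry v1 v3 v0 v2 + tr_brx_bry v2 v3 v0 v1.
Proof.
rewrite CEd4 /cup_c_c_primitive /tr_brx_bry /= !mxcoef_br20 !mxcoef_br01.
by mx2_generalize; mx2_expand; ring.
Qed.

Lemma cup_c_c_coboundary v0 v1 v2 v3 :
  in_sl2 v0 -> in_sl2 v1 -> in_sl2 v2 -> in_sl2 v3 ->
  cup 2 2 (@c_cochain R) (@c_cochain R) [:: v0; v1; v2; v3] =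
  CEd cup_c_c_primitive [:: v0; v1; v2; v3].
Proof.
move=> sl0 sl1 sl2 sl3; rewrite cup22 CEd_cup_c_c_primitive /c_cochain /=.
rewrite !c2_trxy !tr_brx_bry_sl2 //.
(* opaque atoms spare [ring] from comparing the traces up to conversion *)
by repeat match goal with |- context [trxy ?X ?Y] => generalize (trxy X Y) => ? end; ring.
Qed.

End Sl2Polynomials.

Theorem proposition3p6 (R : realType) :
  (* c is a 2-cochain *)
  is_cochain 2 (@c_cochain R) /\
  (* c is a 2-cocycle *)
  (forall s : seq 'M[{poly {poly CC R}}]_2,
      size s = 3 -> all_sl2 s -> CEd (@c_cochain R) s = 0) /\
  (* [c] \cup [c] = 0 in H^4: c \cup c is a coboundary *)
  (exists b : seq 'M[{poly {poly CC R}}]_2 -> CC R,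
      is_cochain 3 b /\
      forall s : seq 'M[{poly {poly CC R}}]_2,
        size s = 4 -> all_sl2 s ->
        cup 2 2 (@c_cochain R) (@c_cochain R) s = CEd b s).
Proof.
split; first exact: c_is_cochain.
split; first by case=> [|u [|v [|w []]]] // _ _; exact: c_cocycle.
exists (@cup_c_c_primitive R); split; first exact: cup_c_c_primitive_is_cochain.
case=> [|v0 [|v1 [|v2 [|v3 []]]]] // _ sl.
exact: cup_c_c_coboundary (sl 0%N isT) (sl 1%N isT) (sl 2%N isT) (sl 3%N isT).
Qed.
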